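(* If $G$ is a partial cube, then $c(G) \geq \left\lceil \frac{\delta(G)}{2} \right\rceil$.
   Context: The $n$-dimensional hypercube $Q_n$ has vertex set $\{0,1\}^n$, two strings being adjacent iff they differ in exactly one position. An induced subgraph $H$ of a graph $G$ is isometric if $d_H(u,v) = d_G(u,v)$ for all $u,v \in V(H)$. A partial cube is a connected graph isomorphic to an isometric subgraph of some hypercube $Q_n$. $\delta(G)$ is the minimum degree of $G$. Cops and Robbers on a finite simple graph $G$: $k$ cops first choose starting vertices, then the robber chooses a starting vertex; thereafter in each round all cops move (each to a neighboring vertex or staying put), then the robber moves (to a neighbor or staying put); all positions are visible to both sides. The cops win if some cop occupies the robber's vertex at some point. The cop number $c(G)$ is the minimum $k$ such that $k$ cops have a strategy guaranteeing capture. *)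

From mathcomp Require Import all_boot.
Set Implicit Arguments. Unset Strict Implicit. Unset Printing Implicit Defensive.

Section Graphs.
Variable T : finType.
Variable e : rel T.

Definition simple_graph := symmetric e /\ irreflexive e.

Definition connected_graph := 0 < #|T| /\ forall u v : T, connect e u v.

Definition walk (u v : T) (k : nat) :=
  exists s : seq T, [/\ size s = k, path e u s & last u s = v].

Definition dist_is (u v : T) (k : nat) :=
  walk u v k /\ forall j, walk u v j -> k <= j.

Definition mindeg : nat := \big[minn/#|T|]_(v : T) #|[set w | e v w]|.
End Graphs.

(* Hypercube Q_n: vertices {0,1}^n, adjacency = differ in exactly one position;
   its graph distance is the Hamming distance. *)
Definition hamming n (a b : {ffun 'I_n -> bool}) : nat := #|[set i | a i != b i]|.
Definition hypercube_adj n (a b : {ffun 'I_n -> bool}) : bool := hamming a b == 1.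

(* Partial cube: connected graph isomorphic (via f) to an induced subgraph H of Q_n
   (f injective, adjacency in G iff adjacency in Q_n) which is isometric:
   d_H(f u, f v) (= d_G(u,v) by the isomorphism) equals d_{Q_n}(f u, f v) = Hamming. *)
Definition partial_cube (T : finType) (e : rel T) :=
  connected_graph e /\
  exists n (f : T -> {ffun 'I_n -> bool}),
    [/\ injective f,
        forall u v, e u v = hypercube_adj (f u) (f v)
      & forall u v, dist_is e u v (hamming (f u) (f v))].

Definition cconf (T : finType) (k : nat) := {ffun 'I_k -> T}.

(* A (history-dependent) cop strategy: initial placement and a move function
   from the history of states (cop configuration, robber position), oldest first,
   to the next cop configuration. *)
Record cop_strategy (T : finType) (k : nat) := CopStrategy {
  cs_start : cconf T k;
  cs_step : seq (cconf T k * T) -> cconf T k }.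

Definition legal_cop_strategy (T : finType) (e : rel T) k (s : cop_strategy T k) :=
  forall (h : seq (cconf T k * T)) (x : cconf T k * T) (i : 'I_k),
    cs_step s (rcons h x) i = x.1 i \/ e (x.1 i) (cs_step s (rcons h x) i).

Definition legal_robber (T : finType) (e : rel T) (r : nat -> T) :=
  forall t, r t.+1 = r t \/ e (r t) (r t.+1).

Fixpoint history (T : finType) k (s : cop_strategy T k) (r : nat -> T) (t : nat)
  : seq (cconf T k * T) :=
  match t with
  | 0 => [:: (cs_start s, r 0)]
  | t'.+1 => let h := history s r t' in rcons h (cs_step s h, r t)
  end.

Definition cops_at (T : finType) k (s : cop_strategy T k) (r : nat -> T) (t : nat)
  : cconf T k := (last (cs_start s, r 0) (history s r t)).1.

(* Capture: at some time a cop occupies the robber's vertex, either after the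
   robber's move (or initial placement) at time t, or after the cops' move
   in round t+1 (before the robber moves). *)
Definition captured (T : finType) k (s : cop_strategy T k) (r : nat -> T) :=
  exists t (i : 'I_k), cops_at s r t i = r t \/ cops_at s r t.+1 i = r t.

Definition cops_win (T : finType) (e : rel T) (k : nat) :=
  exists s : cop_strategy T k, legal_cop_strategy e s /\
    forall r : nat -> T, legal_robber e r -> captured s r.

From mathcomp Require Import all_boot all_order.
Set Implicit Arguments. Unset Strict Implicit. Unset Printing Implicit Defensive.

(* Let v be the robber's vertex and c != v a cop's vertex in a subgraph of Q_n.
   A neighbour of v that c dominates (equals or is adjacent to) differs from v in
   one coordinate, which must be a coordinate where v and c differ; and v, c are
   at Hamming distance at most 2.  So each cop dominates at most two neighbours
   of v.  If 2k < delta, the robber on an unoccupied vertex can always step to a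
   neighbour dominated by no cop; after the cops' next move that vertex is still
   unoccupied, and the robber repeats forever. *)

Definition dominates (T : finType) (e : rel T) (c w : T) := (c == w) || e c w.

Definition safe (T : finType) (e : rel T) k (C : cconf T k) (w : T) :=
  [forall i, ~~ dominates e (C i) w].

Section Hypercube.
Variable n : nat.
Implicit Types a b c w : {ffun 'I_n -> bool}.

Definition dif a b : {set 'I_n} := [set i | a i != b i].

Lemma hammingE a b : hamming a b = #|dif a b|.
Proof. by []. Qed.

Lemma difC a b : dif a b = dif b a.
Proof. by apply/setP => i; rewrite !inE eq_sym. Qed.

Lemma hammingC a b : hamming a b = hamming b a.
Proof. by rewrite !hammingE difC. Qed.

Lemma in_difD a b c i : (i \in dif a c) = (i \in dif a b) (+) (i \in dif b c).
Proof. by rewrite !inE; case: (a i) (b i) (c i) => [] [] []. Qed.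

Lemma dif_eq0 a b : (dif a b == set0) = (a == b).
Proof.
apply/eqP/eqP => [ab0 | -> ]; last by apply/setP => i; rewrite !inE eqxx.
apply/ffunP => i; have : i \notin dif a b by rewrite ab0 inE.
by rewrite inE negbK => /eqP.
Qed.

Lemma dif_inj a : injective (dif a).
Proof.
move=> b c ab_ac; apply/eqP; rewrite -dif_eq0 -subset0.
by apply/subsetP => i; rewrite (in_difD _ a) difC ab_ac addbb.
Qed.

Lemma hamming_triangle a b c : hamming a c <= hamming a b + hamming b c.
Proof.
rewrite !hammingE; apply: leq_trans (leq_card_setU _ _); apply: subset_leq_card.
by apply/subsetP => i; rewrite (in_difD _ b) in_setU; case: (_ \in _) (_ \in _) => [] [].
Qed.

Lemma hamming_dominates c w : dominates (@hypercube_adj n) c w -> hamming c w <= 1.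
Proof.
case/orP => [/eqP <- | /eqP -> //].
by rewrite hammingE leq_eqVlt ltnS leqn0 cards_eq0 dif_eq0 eqxx orbT.
Qed.

Lemma hypercube_dominated_nbr a c w :
  a != c -> hypercube_adj a w -> dominates (@hypercube_adj n) c w ->
  exists2 j, dif a w = [set j] & j \in dif a c.
Proof.
move=> neq_ac adj_aw dom_cw.
have [j dif_aw] : exists j, dif a w = [set j] by apply/cards1P.
exists j => //.
apply: contraNT neq_ac => jNac; rewrite -dif_eq0 -subset0.
have j_cw : j \in dif c w by have := in_difD a c w j; rewrite dif_aw set11 (negbTE jNac).
have dif_cw : dif c w = [set j].
  by apply/eqP; rewrite eq_sym eqEcard sub1set j_cw cards1 -hammingE hamming_dominates.
by apply/subsetP => i; rewrite (in_difD _ w) dif_aw difC dif_cw addbb.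
Qed.

Lemma card_hypercube_dominated_nbr a c : a != c ->
  #|[set w | hypercube_adj a w && dominates (@hypercube_adj n) c w]| <= 2.
Proof.
move=> neq_ac; set S := [set w | _].
have [-> | [w0 Sw0]] := set_0Vmem S; first by rewrite cards0.
have dif_ac_le2 : #|dif a c| <= 2.
  move: Sw0; rewrite inE => /andP[/eqP adj_aw /hamming_dominates dom_cw].
  by rewrite -hammingE (leq_trans (hamming_triangle a w0 c)) // adj_aw hammingC.
rewrite -(card_imset S (@dif_inj a)); apply: leq_trans dif_ac_le2.
apply: leq_trans (leq_imset_card (fun j => [set j]) _); apply: subset_leq_card.
apply/subsetP => _ /imsetP[w + ->]; rewrite inE => /andP[adj_aw dom_cw].
by have [j -> jac] := hypercube_dominated_nbr neq_ac adj_aw dom_cw; apply: imset_f.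
Qed.

End Hypercube.

Lemma card_dominated_nbr_of_cube_embedding (T : finType) (e : rel T) n
    (f : T -> {ffun 'I_n -> bool}) :
  injective f -> (forall u v, e u v = hypercube_adj (f u) (f v)) ->
  forall v c, c != v -> #|[set w | e v w && dominates e c w]| <= 2.
Proof.
move=> f_inj f_adj v c neq_cv.
rewrite -(card_imset _ f_inj); apply: leq_trans (@card_hypercube_dominated_nbr n (f v) (f c) _).
  apply: subset_leq_card; apply/subsetP => _ /imsetP[w + ->].
  by rewrite !inE /dominates !f_adj (inj_eq f_inj).
by rewrite (inj_eq f_inj) eq_sym.
Qed.

Lemma card_bigcup_le_sum (I T : finType) (F : I -> {set T}) :
  #|\bigcup_i F i| <= \sum_i #|F i|.
Proof.
elim/big_rec2: _ => [|i A m _ le_Am]; first by rewrite cards0.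
by apply: leq_trans (leq_card_setU _ _) _; rewrite leq_add2l.
Qed.

Lemma exists_safe_nbr (T : finType) (e : rel T) m k (C : cconf T k) v :
  (forall c, c != v -> #|[set w | e v w && dominates e c w]| <= m) ->
  (forall i, C i != v) -> m * k < #|[set w | e v w]| ->
  exists2 w, e v w & safe e C w.
Proof.
move=> dom_le_m unocc_v deg_gt.
have [w /andP[adj_vw safe_w] | no_safe] := pickP [pred w | e v w && safe e C w].
  by exists w.
suff : #|[set w | e v w]| <= m * k by rewrite leqNgt deg_gt.
have cover : [set w | e v w] \subset \bigcup_i [set w | e v w && dominates e (C i) w].
  apply/subsetP => w; rewrite inE => adj_vw.
  have : ~~ safe e C w by move: (no_safe w); rewrite /= adj_vw => /negbT.
  rewrite negb_forall => /existsP[i /negPn dom_iw].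
  by apply/bigcupP; exists i; rewrite // inE adj_vw.
apply: leq_trans (subset_leq_card cover) _; apply: leq_trans (card_bigcup_le_sum _) _.
have -> : m * k = \sum_(i < k) m by rewrite sum_nat_const card_ord mulnC.
by apply: leq_sum => i _; apply: dom_le_m.
Qed.

Lemma exists_unoccupied (T : finType) k (C : cconf T k) :
  k < #|T| -> exists v, forall i, C i != v.
Proof.
move=> k_lt_T.
have /subsetPn[v _ vNC] : ~~ ([set: T] \subset [set C i | i in 'I_k]).
  apply: contraTN k_lt_T => /subset_leq_card; rewrite cardsT -leqNgt => le_T.
  by apply: leq_trans le_T _; rewrite -[k in _ <= k]card_ord leq_imset_card.
by exists v => i; apply: contraNneq vNC => <-; apply: imset_f.
Qed.

Lemma cops_atS (T : finType) k (s : cop_strategy T k) r t :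
  cops_at s r t.+1 = cs_step s (history s r t).
Proof. by rewrite /cops_at /= last_rcons. Qed.

Lemma cop_move (T : finType) (e : rel T) k (s : cop_strategy T k) r t i :
  legal_cop_strategy e s ->
  cops_at s r t.+1 i = cops_at s r t i \/ e (cops_at s r t i) (cops_at s r t.+1 i).
Proof.
move=> legal_s; rewrite cops_atS.
have [h [x [-> ->]]] : exists h x, history s r t = rcons h x /\ cops_at s r t = x.1.
  case: t => [|t]; first by exists [::], (cs_start s, r 0).
  by do 2 eexists; split; last by rewrite /cops_at /= last_rcons.
exact: legal_s.
Qed.

Lemma safe_unoccupied_next (T : finType) (e : rel T) k (s : cop_strategy T k) r t :
  legal_cop_strategy e s -> safe e (cops_at s r t) (r t) ->
  forall i, cops_at s r t.+1 i != r t.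
Proof.
move=> legal_s /forallP safe_t i; apply: contra (safe_t i) => /eqP <-.
by case: (cop_move r t i legal_s) => [-> | adj]; rewrite /dominates ?eqxx ?adj ?orbT.
Qed.

Section Evasion.
Variables (T : finType) (e : rel T) (k : nat).
Hypothesis escape : forall (C : cconf T k) v,
  (forall i, C i != v) -> exists2 w, e v w & safe e C w.

Definition dodge (C : cconf T k) (x : T) : T :=
  odflt x [pick w | e x w && safe e C w].

Lemma dodge_legal (C : cconf T k) (x : T) : dodge C x = x \/ e x (dodge C x).
Proof. by rewrite /dodge; case: pickP => [w /andP[adj _] | _]; [right | left]. Qed.

Lemma dodge_safe (C : cconf T k) (x : T) : (forall i, C i != x) -> safe e C (dodge C x).
Proof.
move=> unocc_x; rewrite /dodge; case: pickP => [w /andP[] // | no_safe].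
by have [w adj safe_w] := escape unocc_x; have := no_safe w; rewrite /= adj safe_w.
Qed.

Section Play.
Variables (s : cop_strategy T k) (r0 : T).

(* Paired with the history, since the cops' reply depends on the whole play so far. *)
Fixpoint evader_play t : T * seq (cconf T k * T) :=
  if t is t'.+1 then
    let: (x, h) := evader_play t' in
    let y := dodge (cs_step s h) x in (y, rcons h (cs_step s h, y))
  else (r0, [:: (cs_start s, r0)]).

Definition evader t := (evader_play t).1.

Lemma history_evader t : history s evader t = (evader_play t).2.
Proof. by elim: t => //= t ->; rewrite /evader /=; case: evader_play. Qed.

Lemma evaderS t : evader t.+1 = dodge (cops_at s evader t.+1) (evader t).
Proof. by rewrite cops_atS history_evader /evader /=; case: evader_play. Qed.

Lemma evader_legal : legal_robber e evader.
Proof. by move=> t; rewrite evaderS; apply: dodge_legal. Qed.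

Hypothesis legal_s : legal_cop_strategy e s.
Hypothesis safe_r0 : safe e (cs_start s) r0.

Lemma evader_safe t : safe e (cops_at s evader t) (evader t).
Proof.
elim: t => [// | t safe_t]; rewrite evaderS.
exact/dodge_safe/safe_unoccupied_next.
Qed.

Lemma evader_not_captured : ~ captured s evader.
Proof.
move=> [t [i [caught | caught]]].
  by move: (evader_safe t) => /forallP/(_ i); rewrite /dominates caught eqxx.
by move: (safe_unoccupied_next legal_s (evader_safe t) i); rewrite caught eqxx.
Qed.

End Play.

Lemma cops_lose : k < #|T| -> ~ cops_win e k.
Proof.
move=> k_lt_T [s [legal_s win]].
have [v unocc_v] := exists_unoccupied (cs_start s) k_lt_T.
have safe_r0 := dodge_safe unocc_v.
exact: evader_not_captured legal_s safe_r0 (win _ (evader_legal _ _)).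
Qed.

End Evasion.

Lemma mindeg_le_deg (T : finType) (e : rel T) v : mindeg e <= #|[set w | e v w]|.
Proof.
by have := Order.TotalTheory.bigmin_le (T := nat) #|T| v (fun v => #|[set w | e v w]|);
  rewrite minEnat leEnat.
Qed.

Lemma mindeg_le_card (T : finType) (e : rel T) : mindeg e <= #|T|.
Proof.
by have := Order.TotalTheory.bigmin_le_id (T := nat) (index_enum T) #|T| xpredT
  (fun v => #|[set w | e v w]|); rewrite minEnat leEnat.
Qed.

Theorem theorem3p2 (T : finType) (e : rel T) :
  simple_graph e -> partial_cube e ->
  forall k : nat, cops_win e k -> uphalf (mindeg e) <= k.
Proof.
move=> _ [_ [n [f [f_inj f_adj _]]]] k win_k.
rewrite leqNgt gtn_uphalf_double -mul2n; apply/negP => mindeg_gt.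
apply: cops_lose win_k => [C v unocc_v | ].
  apply: exists_safe_nbr (card_dominated_nbr_of_cube_embedding f_inj f_adj (v := v)) unocc_v _.
  exact: leq_trans mindeg_gt (mindeg_le_deg e v).
apply: leq_ltn_trans (leq_trans mindeg_gt (mindeg_le_card e)).
by rewrite leq_pmull.
Qed.
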